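(* Let $N\ge1$ and $0\le k<N$ be integers, let $q,z_0\in\mathbb{C}^\times$, and fix choices of $z_0^{1/N}$ and $q^{1/N^2}$, writing $q^{a/N^2}:=(q^{1/N^2})^a$ for $a\in\mathbb{Z}$. For $(n,m)\in\mathbb{Z}^2$ put $l_{n,m}=kn-Nm$. Let $\tau:\mathbb{Z}^2\to\mathbb{C}^\times$, $(n,m)\mapsto\tau_{(n,m)}$, satisfy $$\tau_{(n,m+1)}\tau_{(n,m-1)}=\tau_{(n,m)}^2+z_0^{1/N}q^{l_{n,m}/N^2}\tau_{(n+1,m)}\tau_{(n-1,m)}\quad\text{for all }(n,m)\in\mathbb{Z}^2,$$ together with $\tau_{(n+N,m+k)}=\tau_{(n,m)}$. Define $$x_{(n,m)}=z_0^{1/N}q^{(l_{n,m}+N)/N^2}\,\tau_{(n-1,m-1)}\tau_{(n+1,m-1)}\tau_{(n,m-1)}^{-2}.$$ Then for all $(n,m)$, $$\frac{x_{(n,m+1)}x_{(n,m-1)}}{x_{(n,m)}^2}=\frac{(1+x_{(n+1,m)})(1+x_{(n-1,m)})}{(1+x_{(n,m)})^2}$$ (whenever the right-hand side is defined) and $x_{(n,m)}=x_{(n+N,m+k)}$. *)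

From mathcomp Require Import all_boot all_algebra.
From mathcomp Require Import complex.
From mathcomp Require Import Rstruct.
Set Implicit Arguments. Unset Strict Implicit. Unset Printing Implicit Defensive.
Import GRing.Theory Num.Theory.
Local Open Scope ring_scope.

Definition CC : numClosedFieldType := (Rdefinitions.R)[i].

Definition lnm (N k : nat) (n m : int) : int := (k%:Z * n - N%:Z * m)%R.

(* x_{(n,m)} = z0^{1/N} q^{(l_{n,m}+N)/N^2} tau(n-1,m-1) tau(n+1,m-1) tau(n,m-1)^{-2},
   where zN = z0^{1/N}, qN2 = q^{1/N^2} and q^{a/N^2} := qN2 ^ a (integer power). *)
Definition xvar (N k : nat) (zN qN2 : CC) (tau : int -> int -> CC) (n m : int) : CC :=
  zN * qN2 ^ (lnm N k n m + N%:Z) * tau (n - 1) (m - 1) * tau (n + 1) (m - 1)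
  / (tau n (m - 1)) ^+ 2.

(* The recurrence at (n, m - 1) says exactly that 1 + x_(n,m) is the second
   multiplicative difference tau_(n,m) tau_(n,m-2) / tau_(n,m-1)^2 of tau in m.
   On the other side, since l_(n,m) is affine in m the monomials in z0^(1/N) and
   q^(1/N^2) cancel from x_(n,m+1) x_(n,m-1) / x_(n,m)^2, which is then the
   product of these differences at n + 1 and n - 1 divided by the square of the
   one at n.  Periodicity of x follows from that of tau, as l is invariant under
   (n, m) -> (n + N, m + k). *)
From mathcomp Require Import all_boot all_algebra.
From mathcomp Require Import complex.
From mathcomp Require Import Rstruct.
From mathcomp Require Import ring.
Import GRing.Theory Num.Theory.
Local Open Scope ring_scope.

Definition second_quot {R : fieldType} (tau : int -> int -> R) (n m : int) : R :=
  tau n (m + 1) * tau n (m - 1) / tau n m ^+ 2.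

Lemma lnm_pred (N k : nat) (n m : int) : lnm N k n (m - 1) = lnm N k n m + N%:Z.
Proof. by rewrite /lnm; ring. Qed.

Lemma lnm_succ (N k : nat) (n m : int) : lnm N k n (m + 1) + N%:Z = lnm N k n m.
Proof. by rewrite /lnm; ring. Qed.

Lemma lnm_periodic (N k : nat) (n m : int) :
  lnm N k (n + N%:Z) (m + k%:Z) = lnm N k n m.
Proof. by rewrite /lnm; ring. Qed.

Section YSystem.

Variables (N k : nat) (zN qN2 : CC) (tau : int -> int -> CC).

Local Notation x := (xvar N k zN qN2 tau).

Hypothesis tau_per : forall n m : int, tau (n + N%:Z) (m + k%:Z) = tau n m.

Lemma xvar_periodic (n m : int) : x n m = x (n + N%:Z) (m + k%:Z).
Proof.
 rewrite /xvar lnm_periodic.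
have -> : n + N%:Z - 1 = (n - 1) + N%:Z by ring.
have -> : n + N%:Z + 1 = (n + 1) + N%:Z by ring.
have -> : m + k%:Z - 1 = (m - 1) + k%:Z by ring.
by rewrite !tau_per.
Qed.

Hypothesis tau_neq0 : forall n m, tau n m != 0.

Hypothesis tau_rec : forall n m : int,
  tau n (m + 1) * tau n (m - 1)
  = tau n m ^+ 2 + zN * qN2 ^ (lnm N k n m) * tau (n + 1) m * tau (n - 1) m.

Lemma one_add_xvar (n m : int) : 1 + x n m = second_quot tau n (m - 1).
Proof.
rewrite /second_quot tau_rec lnm_pred /xvar.
by field; apply: tau_neq0.
Qed.

Hypotheses (zN_neq0 : zN != 0) (qN2_neq0 : qN2 != 0).

Lemma xvar_second_quot (n m : int) :
  x n (m + 1) * x n (m - 1) / x n m ^+ 2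
  = second_quot tau (n + 1) (m - 1) * second_quot tau (n - 1) (m - 1)
    / second_quot tau n (m - 1) ^+ 2.
Proof.
rewrite /xvar /second_quot lnm_succ lnm_pred !expfzDr // addrK subrK.
by field; rewrite !tau_neq0 !expfz_neq0.
Qed.

End YSystem.

Theorem lemma2p8 (N k : nat) (q z0 zN qN2 : CC) (tau : int -> int -> CC)
  (hN : (1 <= N)%N) (hk : (k < N)%N)
  (hq : q != 0) (hz0 : z0 != 0)
  (hzN : zN ^+ N = z0) (hqN2 : qN2 ^+ (N * N) = q)
  (htau0 : forall n m, tau n m != 0)
  (hrec : forall n m : int,
     tau n (m + 1) * tau n (m - 1)
     = tau n m ^+ 2 + zN * qN2 ^ (lnm N k n m) * tau (n + 1) m * tau (n - 1) m)
  (hper : forall n m : int, tau (n + N%:Z) (m + k%:Z) = tau n m) :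
  (forall n m : int, 1 + xvar N k zN qN2 tau n m != 0 ->
     xvar N k zN qN2 tau n (m + 1) * xvar N k zN qN2 tau n (m - 1)
       / xvar N k zN qN2 tau n m ^+ 2
     = (1 + xvar N k zN qN2 tau (n + 1) m) * (1 + xvar N k zN qN2 tau (n - 1) m)
       / (1 + xvar N k zN qN2 tau n m) ^+ 2)
  /\ (forall n m : int,
     xvar N k zN qN2 tau n m = xvar N k zN qN2 tau (n + N%:Z) (m + k%:Z)).
Proof.
have zN_neq0 : zN != 0.
  by apply: contraNneq hz0 => zN0; rewrite -hzN expf_eq0 hN zN0 eqxx.
have qN2_neq0 : qN2 != 0.
  by apply: contraNneq hq => qN20; rewrite -hqN2 expf_eq0 muln_gt0 hN qN20 eqxx.
split; last exact: xvar_periodic hper.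
move=> n m _.
by rewrite xvar_second_quot // !one_add_xvar.
Qed.
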